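(* Let $d_d\le d_f$ be positive integers, let $f:\mathbb{F}_q^k\to\mathrm{Im}(f)$ be a $(d_f-1)$-locally binary function, and suppose there exists a systematic $[n,k,d_d]$ linear code over $\mathbb{F}_q$ (generator matrix $[I_k\mid P]$). Then $r_f(k:d_d,d_f)\le n-k+d_f-d_d$.
   Context: $d(\cdot,\cdot)$ is Hamming distance. The function ball of $f$ of radius $\rho$ around $u$ is $B_f(u,\rho)=\{f(u'):u'\in\mathbb{F}_q^k,\ d(u,u')\le\rho\}$; $f$ is $\rho$-locally binary if $|B_f(u,\rho)|\le 2$ for all $u\in\mathbb{F}_q^k$. For integers $0\le d_d\le d_f$, an $(f\!:d_d,d_f)$-FCC with redundancy $r$ is a systematic encoding $\mathfrak{C}_f(u)=(u,p_u)\in\mathbb{F}_q^{k+r}$ with $d(\mathfrak{C}_f(u_1),\mathfrak{C}_f(u_2))\ge d_d$ whenever $u_1\ne u_2$ and $\ge d_f$ whenever $f(u_1)\ne f(u_2)$; $r_f(k:d_d,d_f)$ is the minimum such $r$. *)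

From HB Require Import structures.
From mathcomp Require Import all_boot all_order all_algebra all_field.
Set Implicit Arguments. Unset Strict Implicit. Unset Printing Implicit Defensive.

Definition hamming (F : finFieldType) (n : nat) (x y : 'rV[F]_n) : nat :=
  #|[set i : 'I_n | x ord0 i != y ord0 i]|.

Definition fun_ball (F : finFieldType) (k : nat) (Y : eqType)
  (f : 'rV[F]_k -> Y) (u : 'rV[F]_k) (rho : nat) : seq Y :=
  undup [seq f u' | u' <- enum [set: 'rV[F]_k] & hamming u u' <= rho].

Definition locally_binary (F : finFieldType) (k : nat) (Y : eqType)
  (f : 'rV[F]_k -> Y) (rho : nat) : Prop :=
  forall u : 'rV[F]_k, size (fun_ball f u rho) <= 2.

Definition is_FCC (F : finFieldType) (k r : nat) (Y : eqType)
  (f : 'rV[F]_k -> Y) (dd df : nat) (p : 'rV[F]_k -> 'rV[F]_r) : Prop :=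
  forall u1 u2 : 'rV[F]_k,
    (u1 != u2 -> dd <= hamming (row_mx u1 (p u1)) (row_mx u2 (p u2))) /\
    (f u1 != f u2 -> df <= hamming (row_mx u1 (p u1)) (row_mx u2 (p u2))).

Definition sys_code_min_dist (F : finFieldType) (k m : nat) (P : 'M[F]_(k, m)) (d : nat) : Prop :=
  (forall u1 u2 : 'rV[F]_k, u1 != u2 ->
      d <= hamming (row_mx u1 (u1 *m P)) (row_mx u2 (u2 *m P))) /\
  (exists u1 u2 : 'rV[F]_k, u1 != u2 /\
      hamming (row_mx u1 (u1 *m P)) (row_mx u2 (u2 *m P)) = d).

From HB Require Import structures.
From mathcomp Require Import all_boot all_order all_algebra all_field.
From mathcomp Require Import zify.

Set Implicit Arguments. Unset Strict Implicit. Unset Printing Implicit Defensive.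
Import GRing.Theory.

(* Join by an edge the inputs at distance at most df - 1 with different
   f-values.  Local binarity says that all neighbours of a vertex share one
   f-value, which forces every edge of a connected component to touch the
   f-value of its root; so "f u equals f at the root of u" is a proper
   2-colouring of this graph.  Appending the colour, repeated df - dd times,
   to the parity part of the [n, k, dd] code lifts the distance between
   inputs with different f-values from dd to df. *)

Lemma hammingE (F : finFieldType) (n : nat) (x y : 'rV[F]_n) :
  hamming x y = \sum_(i < n) (x ord0 i != y ord0 i).
Proof.
rewrite /hamming -sum1_card big_mkcond /=; apply: eq_bigr => i _.
by rewrite inE; case: (_ != _).
Qed.

Lemma hamming_row_mx (F : finFieldType) (m n : nat)
    (a a' : 'rV[F]_m) (b b' : 'rV[F]_n) :
  hamming (row_mx a b) (row_mx a' b') = hamming a a' + hamming b b'.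
Proof.
rewrite !hammingE big_split_ord /=.
by congr (_ + _); apply: eq_bigr => i _; rewrite ?row_mxEl ?row_mxEr.
Qed.

Lemma hammingxx (F : finFieldType) (n : nat) (x : 'rV[F]_n) : hamming x x = 0.
Proof. by rewrite hammingE big1 // => i _; rewrite eqxx. Qed.

Lemma hammingC (F : finFieldType) (n : nat) (x y : 'rV[F]_n) :
  hamming x y = hamming y x.
Proof. by rewrite !hammingE; apply: eq_bigr => i _; rewrite eq_sym. Qed.

Lemma hamming_const_mx (F : finFieldType) (n : nat) (a b : F) : a != b ->
  hamming (const_mx a : 'rV[F]_n) (const_mx b) = n.
Proof.
move=> neq_ab; rewrite hammingE (eq_bigr (fun _ => 1)) ?sum1_card ?card_ord //.
by move=> i _; rewrite !mxE neq_ab.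
Qed.

Lemma mem_fun_ball (F : finFieldType) (k : nat) (Y : eqType)
    (f : 'rV[F]_k -> Y) (u v : 'rV[F]_k) (rho : nat) :
  hamming u v <= rho -> f v \in fun_ball f u rho.
Proof.
move=> d_uv; rewrite /fun_ball mem_undup; apply/mapP; exists v => //.
by rewrite mem_filter mem_enum in_setT andbT.
Qed.

Lemma locally_binary_neighbours (F : finFieldType) (k : nat) (Y : eqType)
    (f : 'rV[F]_k -> Y) (rho : nat) (u v w : 'rV[F]_k) :
  locally_binary f rho ->
  hamming u v <= rho -> hamming u w <= rho ->
  f u != f v -> f u != f w -> f v = f w.
Proof.
move=> lb_f d_uv d_uw neq_uv neq_uw; apply/eqP/negPn/negP => neq_vw.
have: size [:: f u; f v; f w] <= size (fun_ball f u rho).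
  apply: uniq_leq_size; first by rewrite /= !inE negb_or neq_uv neq_uw neq_vw.
  by move=> y; rewrite !inE => /or3P[] /eqP ->; apply: mem_fun_ball;
    rewrite ?hammingxx.
by move/leq_trans/(_ (lb_f u)).
Qed.

Section TwoColouring.

Variables (T : finType) (Y : eqType) (e : rel T) (g : T -> Y).
Hypothesis e_sym : symmetric e.
Hypothesis edge_neq : forall u v, e u v -> g u != g v.
Hypothesis neighbours_agree : forall u v w, e u v -> e u w -> g v = g w.

Let e_csym : connect_sym e := sym_connect_sym e_sym.

Definition root_colour (u : T) : bool := g u == g (fingraph.root e u).

Lemma edge_meets_root_value (r u v : T) :
  connect e r u -> e u v -> (g u == g r) || (g v == g r).
Proof.
pose touches x := [forall y, e x y ==> (g x == g r) || (g y == g r)].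
have touches_closed : closed e touches.
  apply: intro_closed => // x y e_xy /forallP touches_x.
  apply/forallP => z; apply/implyP => e_yz.
  case/orP: (implyP (touches_x y) e_xy) => [/eqP <-|->]; last by [].
  have e_yx : e y x by rewrite e_sym.
  by rewrite (neighbours_agree e_yx e_yz) eqxx orbT.
move=> c_ru e_uv; have: u \in touches.
  rewrite -(closed_connect touches_closed c_ru).
  by apply/forallP => y; rewrite eqxx implybT.
by move/forallP/(_ v)/implyP; apply.
Qed.

Lemma root_colour_edge (u v : T) : e u v -> root_colour u != root_colour v.
Proof.
move=> e_uv; have same_root : fingraph.root e u = fingraph.root e v.
  by apply/(fingraph.rootP e_csym); apply: connect1.
have c_ru : connect e (fingraph.root e u) u by rewrite e_csym fingraph.connect_root.
rewrite /root_colour -same_root.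
have /negbTE neq_uv := edge_neq e_uv.
by case/orP: (edge_meets_root_value c_ru e_uv) => /eqP <-;
  rewrite eqxx ?(eq_sym (g v)) neq_uv.
Qed.

End TwoColouring.

Lemma is_FCC_append_colour (F : finFieldType) (k m s dd df : nat) (Y : eqType)
    (f : 'rV[F]_k -> Y) (P : 'M[F]_(k, m)) (c : 'rV[F]_k -> bool) :
  (forall u1 u2 : 'rV[F]_k, u1 != u2 ->
     dd <= hamming (row_mx u1 (u1 *m P)) (row_mx u2 (u2 *m P))) ->
  (forall u1 u2, f u1 != f u2 -> hamming u1 u2 < df -> c u1 != c u2) ->
  dd + s >= df ->
  is_FCC f dd df (fun u => row_mx (u *m P) (const_mx (c u)%:R%R : 'rV_s)).
Proof.
move=> dist_P colour_sep le_df u1 u2; rewrite !hamming_row_mx.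
have dist_P' := dist_P u1 u2; rewrite hamming_row_mx in dist_P'.
split=> [/dist_P'|neq_f]; first lia.
have neq_u : u1 != u2 by apply: contraNneq neq_f => ->.
have := dist_P' neq_u; case: (ltnP (hamming u1 u2) df) => [lt_df|]; last lia.
rewrite hamming_const_mx; first lia.
move: (colour_sep _ _ neq_f lt_df).
by case: (c u1); case: (c u2); rewrite //= ?oner_neq0 // eq_sym oner_neq0.
Qed.

Theorem lemma7 (F : finFieldType) (k n dd df : nat) (Y : eqType)
  (f : 'rV[F]_k -> Y) :
  0 < dd -> dd <= df ->
  locally_binary f (df - 1) ->
  k <= n ->
  (exists P : 'M[F]_(k, n - k), sys_code_min_dist P dd) ->
  exists r : nat, r <= n - k + df - dd /\
    exists p : 'rV[F]_k -> 'rV[F]_r, is_FCC f dd df p.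
Proof.
move=> _ le_dd_df lb_f _ [P [dist_P _]].
pose e u v := (hamming u v <= df - 1) && (f u != f v).
have e_sym : symmetric e by move=> u v; rewrite /e hammingC eq_sym.
have edge_neq u v : e u v -> f u != f v by case/andP.
have neighbours_agree u v w : e u v -> e u w -> f v = f w.
  by case/andP=> d_uv neq_uv /andP[d_uw neq_uw];
    apply: (locally_binary_neighbours lb_f d_uv d_uw).
exists (n - k + (df - dd)); split; first lia.
exists (fun u => row_mx (u *m P) (const_mx (root_colour e f u)%:R%R)).
apply: is_FCC_append_colour => [//|u1 u2 neq_f lt_df|]; last lia.
by apply: (root_colour_edge e_sym edge_neq neighbours_agree); rewrite /e neq_f andbT; lia.
Qed.
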